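(* Fix $n\in\mathbb N$ and let $H_0$ be a finite weakly $n$-saturated graph with vertex set $V(H_0)=\{1,2,\dots,k\}$ for some $k\ge n$. For $m\in\mathbb N$ let $H_m$ be the random graph with vertex set $\{1,\dots,k\}\times\{0,1,\dots,m\}$ whose edge relation is determined as follows: (i) for all $i<j\le k$, $(i,0)$ and $(j,0)$ are adjacent in $H_m$ if and only if $i$ and $j$ are adjacent in $H_0$; (ii) for all $i,j\le k$, if $i$ and $j$ are not adjacent in $H_0$, then $(i,s)$ and $(j,t)$ are not adjacent for any $s,t\le m$; (iii) if $i$ and $j$ are adjacent in $H_0$ and $s,t\le m$ with at least one of $s,t$ positive, then $(i,s)$ and $(j,t)$ are adjacent in $H_m$ with probability $1/2$, each such decision made independently of all others; (iv) $H_m$ is reflexive (and the edge relation is symmetric). Then there is $m\in\mathbb N$ such that (A) the probability that $H_m$ is $n$-saturated is positive; and (B) the probability of the following event $\mathcal X$ is positive: for every $p<n$, every $i_1,\dots,i_p,i\in V(H_0)$ such that $i_1,\dots,i_p$ are each adjacent to $i$ in $H_0$, and every $j_1,\dots,j_p\in\{0,1,\dots,m\}$, there is $l\in\{0,1,\dots,m\}$ such that $(i_1,j_1),\dots,(i_p,j_p)$ are all adjacent to $(i,l)$ in $H_m$.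
   Context: A graph is a pair $G=(V(G),E(G))$ where $V(G)$ is a non-empty set and $E(G)$ is a symmetric and reflexive relation on $V(G)$. For $A\subseteq V(G)$, a type over $A$ is a function $f\colon A\to\{0,1\}$; a vertex $v\in V(G)\setminus A$ realizes $f$ if for every $a\in A$, $(a,v)\in E(G)$ iff $f(a)=1$. $G$ is $n$-saturated if for every $A\subseteq V(G)$ with $|A|<n$ and every type $f\in\{0,1\}^A$ some vertex $x\in V(G)\setminus A$ realizes $f$. $G$ is weakly $n$-saturated if for every $A\subseteq V(G)$ with $|A|<n$ there is $x\in V(G)$ adjacent to every $a\in A$. *)

From mathcomp Require Import all_boot all_order all_algebra.
Set Implicit Arguments. Unset Strict Implicit. Unset Printing Implicit Defensive.
Import GRing.Theory Num.Theory.

Definition is_graph (T : finType) (e : rel T) : Prop := reflexive e /\ symmetric e.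

Definition weakly_saturated (T : finType) (e : rel T) (n : nat) : Prop :=
  forall A : {set T}, #|A| < n -> exists x : T, forall a, a \in A -> e a x.

(* n-saturated (boolean): every type f over A (|A| < n) is realized by some x
   outside A.  A type over A is given by a function T -> bool, only its values
   on A matter. *)
Definition saturatedb (T : finType) (e : rel T) (n : nat) : bool :=
  [forall A : {set T}, (#|A| < n) ==>
     [forall f : {ffun T -> bool},
        [exists x, (x \notin A) && [forall a in A, e a x == f a]]]].

Definition vert (k m : nat) := ('I_k * 'I_m.+1)%type.

(* Sample space: a fair coin for every ordered pair of vertices; the edge
   between x <> y uses the coin of the pair ordered by enum_rank, so each
   random unordered pair gets an independent fair coin. *)
Definition Omega (k m : nat) := {ffun (vert k m * vert k m) -> bool}.

Definition Hm_edge (k : nat) (E0 : rel 'I_k) (m : nat) (w : Omega k m)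
  : rel (vert k m) := fun x y =>
  if x == y then true
  else if ~~ E0 x.1 y.1 then false
  else if (x.2 == ord0) && (y.2 == ord0) then true
  else if enum_rank x < enum_rank y then w (x, y) else w (y, x).

Definition prob (k m : nat) (ev : pred (Omega k m)) : rat :=
  (#|[set w | ev w]|%:R / #|{: Omega k m}|%:R)%R.

Definition event_sat (k : nat) (E0 : rel 'I_k) (m n : nat) : pred (Omega k m) :=
  fun w => saturatedb (Hm_edge E0 w) n.

Definition event_X (k : nat) (E0 : rel 'I_k) (m n : nat) : pred (Omega k m) :=
  fun w =>
  [forall p : 'I_n, [forall is_ : {ffun 'I_p -> 'I_k}, [forall i : 'I_k,
    [forall js : {ffun 'I_p -> 'I_m.+1},
      [forall q, E0 (is_ q) i] ==>
      [exists l : 'I_m.+1, [forall q, Hm_edge E0 w (is_ q, js q) (i, l)]]]]]].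

Arguments event_sat {k} E0 m n _.
Arguments event_X {k} E0 m n _.
Arguments prob {k m} ev.

(* Call w good if for every column i, every set A of at most n vertices and
   every B there is a level l > 0 with (i, l) outside A whose coin with each
   a in A is [a \in B].  A good w lies in both events: for saturation, weak
   saturation of H_0 gives a column i adjacent in H_0 to every column met by B,
   and for X one takes B = A.  When m >= n + L, a fixed (i, A, B) has L candidate
   levels whose coins with A are pairwise disjoint sets of at most n coins, so it
   fails for at most a fraction (1 - 2^-n)^L of all w.  Up to coding there are
   only polynomially many triples in L, so a union bound leaves a good w. *)

From mathcomp Require Import all_boot all_order all_algebra.
From mathcomp Require Import zify.
Import GRing.Theory Num.Theory.
Set Implicit Arguments. Unset Strict Implicit. Unset Printing Implicit Defensive.

Lemma leq_exp2rW m n e : m <= n -> m ^ e <= n ^ e.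
Proof. by move=> le_mn; elim: e => // e IHe; rewrite !expnS leq_mul. Qed.

Lemma leq_sqr_exp2 s : 4 <= s -> s * s <= 2 ^ s.
Proof.
elim: s => // s IHs; rewrite leq_eqVlt => /predU1P[<- // | le4s].
by have := IHs le4s; rewrite expnS; nia.
Qed.

Lemma exists_linear_le_exp2 a b : exists s, a * s + b <= 2 ^ s.
Proof.
exists (a + b + 4); have := leq_sqr_exp2 (leq_addl (a + b) 4); nia.
Qed.

Lemma exists_poly_lt_exp2 c d : exists t, c * t.+1 ^ d < 2 ^ t.
Proof.
have [s lin_s] := exists_linear_le_exp2 d c.+1.
exists (d * s + c).
have pow_le : (d * s + c).+1 ^ d <= 2 ^ (d * s).
  by rewrite mulnC expnM leq_exp2rW // mulnC -addnS.
have := ltn_expl c (ltnSn 1); rewrite expnD mulnC.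
by move: pow_le (expn_gt0 (d * s + c).+1 d); nia.
Qed.

Lemma expnS_ge_binom x q : x ^ q.+1 + q.+1 * x ^ q <= x.+1 ^ q.+1.
Proof.
elim: q => [|q IHq]; first by rewrite !expn1 expn0 addn1.
rewrite [x.+1 ^ q.+2]expnS; apply: leq_trans (leq_mul (leqnn _) IHq).
by rewrite !expnS; nia.
Qed.

Lemma double_expn_pred_le Q : 0 < Q -> 2 * Q.-1 ^ Q <= Q ^ Q.
Proof.
case: Q => // x _; have := expnS_ge_binom x x.
by rewrite [x ^ x.+1]expnS /=; nia.
Qed.

Lemma exists_poly_geometric_lt c a b d Q : 0 < Q ->
  exists L, c * (a * L + b) ^ d * Q.-1 ^ L < Q ^ L.
Proof.
case: Q => // -[_ | Q' _]; first by exists 1; rewrite muln0.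
set Q := Q'.+2; set e := a * Q + b.
have [t poly_t] := exists_poly_lt_exp2 (c * e ^ d) d.
(* As 2 * (Q-1)^Q <= Q^Q, the choice L = Q * t gains a factor 2^t over (Q-1)^L. *)
exists (Q * t).
have base_le : (a * (Q * t) + b) ^ d <= e ^ d * t.+1 ^ d.
  by rewrite -expnMn leq_exp2rW // /e; nia.
have geom_pos : 0 < Q.-1 ^ (Q * t) by rewrite expn_gt0.
apply: (@leq_trans (2 ^ t * Q.-1 ^ (Q * t))).
  rewrite ltn_pmul2r //; apply: leq_ltn_trans poly_t.
  by rewrite -mulnA leq_mul2l base_le orbT.
by rewrite !expnM -expnMn leq_exp2rW // double_expn_pred_le.
Qed.

Section BooleanCube.
Variable X : finType.
Local Notation cube := {ffun X -> bool}.
Implicit Types (p : X) (w : cube) (P : pred cube).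

Definition flip p w : cube := [ffun x => (x == p) (+) w x].

Lemma flipK p : involutive (flip p).
Proof. by move=> w; apply/ffunP=> x; rewrite !ffunE addbA addbb. Qed.

Lemma flip_at p w : flip p w p = ~~ w p.
Proof. by rewrite ffunE eqxx. Qed.

Lemma flip_other p q w : q != p -> flip p w q = w q.
Proof. by rewrite ffunE => /negbTE ->. Qed.

Lemma card_flip_half p P b : (forall w, P (flip p w) = P w) ->
  2 * #|[set w : cube | P w && (w p == b)]| = #|[set w : cube | P w]|.
Proof.
move=> flipP.
have flipE : flip p @: [set w : cube | P w && (w p == b)] =
             [set w : cube | P w] :\: [set w : cube | w p == b].
  apply/setP=> w; rewrite (can2_imset_pre _ (flipK p) (flipK p)) !inE flipP flip_at.
  by rewrite andbC; case: (w p); case: b.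
rewrite -(cardsID [set w : cube | w p == b] [set w : cube | P w]) -flipE.
rewrite card_imset; last exact: can_inj (flipK p).
by rewrite mul2n -addnn; congr (_ + _); apply: eq_card => w; rewrite !inE.
Qed.

Definition agreeb w (s : seq (X * bool)) := all (fun xb => w xb.1 == xb.2) s.

Lemma card_agree P s : uniq (unzip1 s) ->
  (forall p w, p \in unzip1 s -> P (flip p w) = P w) ->
  2 ^ size s * #|[set w : cube | P w && agreeb w s]| = #|[set w : cube | P w]|.
Proof.
elim: s P => [|[p b] s IHs] P /=.
  by move=> _ _; rewrite mul1n; apply: eq_card => w; rewrite !inE andbT.
case/andP=> p_notin s_uniq flipP.
have agree_flip w : agreeb (flip p w) s = agreeb w s.
  apply: eq_in_all => -[q c] /(map_f fst) q_in /=; rewrite flip_other //.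
  by apply: contraNneq p_notin => <-.
have flipP_s q w : q \in unzip1 s -> P (flip q w) = P w.
  by move=> q_in; apply: flipP; rewrite inE q_in orbT.
rewrite -(IHs P s_uniq flipP_s) -(@card_flip_half p _ b) => [|w]; last first.
  by rewrite /= flipP ?mem_head // agree_flip.
rewrite expnS -mulnA mulnCA; congr (_ * (2 * _)).
by apply: eq_card => w; rewrite !inE -andbA (andbC (agreeb w s)).
Qed.

Lemma card_avoid_blocks n (bs : seq (seq (X * bool))) :
  uniq (flatten (map unzip1 bs)) -> all (fun s => size s <= n) bs ->
  (2 ^ n) ^ size bs * #|[set w : cube | all (fun s => ~~ agreeb w s) bs]|
    <= (2 ^ n).-1 ^ size bs * #|cube|.
Proof.
elim: bs => [|s bs IHbs] /=.
  by move=> _ _; rewrite !mul1n; apply: max_card.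
rewrite cat_uniq => /and3P[s_uniq s_disj bs_uniq] /andP[s_size bs_size].
set R := fun w => all (fun s => ~~ agreeb w s) bs.
have flipR p w : p \in unzip1 s -> R (flip p w) = R w.
  move=> p_in; apply: eq_in_all => s' s'_in; congr negb.
  apply: eq_in_all => -[q c] /(map_f fst) q_in /=; rewrite flip_other //.
  have q_notin : q \notin unzip1 s.
    apply: contra s_disj => q_in_s; apply/hasP; exists q => //.
    by apply/flattenP; exists (unzip1 s'); rewrite ?map_f.
  by apply: contraNneq q_notin => ->.
have := card_agree s_uniq flipR.
set e := #|[set w : cube | R w && _]|; set c := #|[set w : cube | R w]| => ce.
have card_split : #|[set w : cube | ~~ agreeb w s && R w]| = c - e.
  rewrite /c -(cardsID [set w : cube | agreeb w s] [set w : cube | R w]) /e.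
  rewrite (_ : _ :&: _ = [set w : cube | R w && agreeb w s]) ?addKn; last first.
    by apply/setP => w; rewrite !inE.
  by apply: eq_card => w; rewrite !inE andbC.
have c_le : c <= 2 ^ n * e by rewrite -ce leq_mul2r leq_pexp2l ?orbT.
have step : 2 ^ n * (c - e) <= (2 ^ n).-1 * c.
  by rewrite mulnBr -subn1 mulnBl mul1n leq_sub2l.
rewrite card_split !expnS mulnAC; apply: leq_trans (leq_mul step (leqnn _)) _.
by rewrite -mulnA (mulnC c) -mulnA leq_mul2l IHbs ?orbT.
Qed.

End BooleanCube.

Lemma card_bigcup_le (I T : finType) (F : I -> {set T}) :
  #|\bigcup_i F i| <= \sum_i #|F i|.
Proof.
elim/big_ind2: _ => [|a A b B le_A le_B|//]; first by rewrite cards0.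
exact: leq_trans (leq_card_setU A B) (leq_add le_A le_B).
Qed.

Section FreshVertices.
Variables k m : nat.
Local Notation V := (vert k m).
Implicit Types (w : Omega k m) (i : 'I_k) (l : 'I_m.+1) (A B : {set V}).

Definition edge_coin (x y : V) : V * V :=
  if enum_rank x < enum_rank y then (x, y) else (y, x).

Lemma edge_coin_eq (a b a' b' : V) : edge_coin a b = edge_coin a' b' ->
  (a = a' /\ b = b') \/ (a = b' /\ b = a').
Proof. by rewrite /edge_coin; do 2 case: ifP => _; case=> -> ->; auto. Qed.

Lemma Hm_edge_fresh (E0 : rel 'I_k) w (a : V) i l :
  a != (i, l) -> l != ord0 -> Hm_edge E0 w a (i, l) = E0 a.1 i && w (edge_coin a (i, l)).
Proof.
move=> /negbTE a_neq /negbTE l_neq; rewrite /Hm_edge a_neq /= l_neq andbF.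
by rewrite /edge_coin; case: (E0 a.1 i); case: ifP.
Qed.

Definition fresh_witness w i A B l : bool :=
  [&& l != ord0, (i, l) \notin A & [forall a in A, w (edge_coin a (i, l)) == (a \in B)]].

Lemma card_fresh_levels i A :
  m - #|A| <= #|[set l | (l != ord0) && ((i, l) \notin A)]|.
Proof.
set S := [set l | _ && _]; set column := [set l | (i, l) \in A].
have column_le : #|column| <= #|A|.
  have pair_i_inj : injective (fun l : 'I_m.+1 => (i, l)) by move=> l l' [].
  rewrite -(card_imset _ pair_i_inj).
  by apply: subset_leq_card; apply/subsetP => x /imsetP[l]; rewrite inE => il_in ->.
have S_compl : ~: S = ord0 |: column.
  by apply/setP => l; rewrite !inE negb_and !negbK.
have := cardsC S; rewrite S_compl cardsU1 card_ord.
by move: column_le; case: (_ \notin _) => /=; lia.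
Qed.

Lemma card_no_fresh_witness n L i A B : #|A| <= n -> n + L <= m ->
  (2 ^ n) ^ L * #|[set w | ~~ [exists l, fresh_witness w i A B l]]|
    <= (2 ^ n).-1 ^ L * #|Omega k m|.
Proof.
move=> A_le L_le.
set S := [set l | (l != ord0) && ((i, l) \notin A)].
have L_le_S : L <= #|S| by apply: leq_trans (card_fresh_levels i A); lia.
set ls := take L (enum S).
have ls_size : size ls = L by rewrite size_takel // -cardE.
have ls_fresh l : l \in ls -> (l != ord0) && ((i, l) \notin A).
  by move/mem_take; rewrite mem_enum inE.
pose block l := [seq (edge_coin a (i, l), a \in B) | a <- enum A].
have coins_uniq : uniq (flatten (map unzip1 (map block ls))).
  have -> : flatten (map unzip1 (map block ls)) =
            [seq edge_coin a (i, l) | l <- ls, a <- enum A].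
    by rewrite -map_comp; congr flatten; apply: eq_map => l; rewrite /comp /unzip1 -map_comp.
  apply: allpairs_uniq; [exact: take_uniq (enum_uniq _) | exact: enum_uniq | ] => -[l a] [l' a'].
  move=> /allpairsP[[l1 a1] [l1_in a1_in [-> ->]]] /allpairsP[[l2 a2] [l2_in a2_in [-> ->]]] /=.
  case/edge_coin_eq => [[-> [->]] // | [a_eq _]].
  by move: (ls_fresh _ l2_in) a1_in; rewrite mem_enum -a_eq => /andP[_ /negbTE ->].
have blocks_size : all (fun s => size s <= n) (map block ls).
  by apply/allP => _ /mapP[l _ ->]; rewrite size_map -cardE.
have := card_avoid_blocks coins_uniq blocks_size; rewrite size_map ls_size.
apply: leq_trans; rewrite leq_mul2l; apply/orP; right.
apply: subset_leq_card; apply/subsetP => w; rewrite !inE => no_witness.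
apply/allP => _ /mapP[l l_in ->]; apply: contra no_witness => agree_l.
apply/existsP; exists l; rewrite /fresh_witness andbA ls_fresh //=.
apply/forall_inP => a a_in; apply: (allP agree_l (edge_coin a (i, l), a \in B)).
by apply: map_f; rewrite mem_enum.
Qed.

Definition extension_property n w :=
  forall i A B, #|A| <= n -> exists l, fresh_witness w i A B l.

End FreshVertices.

(* A set of at most n points with a marked subset is coded by a pair (g, h);
   there are only (#|T|.+1)^n * 2^n such codes. *)
Section SmallSetCodes.
Variables (T : finType) (n : nat).
Implicit Types (g : {ffun 'I_n -> option T}) (h : {ffun 'I_n -> bool}).

Definition codom_set g : {set T} := [set x | Some x \in codom g].

Definition marked_set g h : {set T} := [set x | [exists j, (g j == Some x) && h j]].

Lemma card_codom_set g : #|codom_set g| <= n.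
Proof.
rewrite -(card_imset _ Some_inj) -[n]card_ord -(size_codom g).
apply: leq_trans (card_size _); apply: subset_leq_card.
by apply/subsetP => y /imsetP[x]; rewrite inE => gx ->.
Qed.

Lemma small_set_code (A B : {set T}) : #|A| <= n ->
  exists g h, codom_set g = A /\ {in A, forall a, (a \in marked_set g h) = (a \in B)}.
Proof.
move=> A_le; pose g := [ffun j : 'I_n => onth (enum A) j].
pose h := [ffun j => if g j is Some x then x \in B else false].
have gP x : (Some x \in codom g) = (x \in A).
  rewrite -mem_enum; apply/codomP/onthP => [[j] | [j jx]]; first by rewrite ffunE; exists j.
  have j_lt : j < n by rewrite (leq_trans _ A_le) // cardE -onthTE jx.
  by exists (Ordinal j_lt); rewrite ffunE.
exists g, h; split => [|a a_in]; first by apply/setP => x; rewrite inE gP.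
rewrite inE; apply/existsP/idP => [[j /andP[/eqP g_j]] | a_B].
  by rewrite ffunE g_j.
have /codomP[j g_j] : Some a \in codom g by rewrite gP.
by exists j; rewrite -g_j eqxx ffunE -g_j.
Qed.

End SmallSetCodes.

Lemma exists_extension_property n k : exists m (w : Omega k m), extension_property n w.
Proof.
have [L geom_L] := exists_poly_geometric_lt (k * 2 ^ n) k (k * n.+1 + 1) n (expn_gt0 2 n).
exists (n + L); set m := n + L.
pose I : finType := ('I_k * {ffun 'I_n -> option (vert k m)} * {ffun 'I_n -> bool})%type.
pose bad (x : I) := [set w : Omega k m |
  ~~ [exists l, fresh_witness w x.1.1 (codom_set x.1.2) (marked_set x.1.2 x.2) l]].
have card_I : #|I| = k * 2 ^ n * (k * L + (k * n.+1 + 1)) ^ n.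
  rewrite !card_prod !card_ffun card_option card_prod !card_ord card_bool.
  by rewrite mulnAC; congr (_ * _ ^ _ * _); congr (_ ^ n); rewrite /m; nia.
have Omega_gt0 : 0 < #|Omega k m| by apply/card_gt0P; exists [ffun => true].
have bad_small : #|\bigcup_x bad x| < #|Omega k m|.
  have pow_gt0 : 0 < (2 ^ n) ^ L by rewrite !expn_gt0.
  rewrite -(ltn_pmul2l pow_gt0).
  apply: leq_ltn_trans (_ : _ <= #|I| * ((2 ^ n).-1 ^ L * #|Omega k m|)) _.
    apply: leq_trans (leq_mul (leqnn _) (card_bigcup_le bad)) _.
    rewrite big_distrr -sum_nat_const /=; apply: leq_sum => x _.
    exact: card_no_fresh_witness (card_codom_set _) _.
  by rewrite card_I mulnA ltn_pmul2r.
have [w _ w_good] : exists2 w, w \in [set: Omega k m] & w \notin \bigcup_x bad x.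
  by apply/subsetPn; apply: contraL bad_small => /subset_leq_card; rewrite cardsT -leqNgt.
exists w => i A B /(small_set_code B)[g [h [<- marked_B]]].
have : w \notin bad (i, g, h).
  by apply: contra w_good => w_bad; apply/bigcupP; exists (i, g, h).
rewrite inE negbK => /existsP[l /and3P[l_gt0 l_fresh /forall_inP coins]].
exists l; apply/and3P; split=> //; apply/forall_inP => a a_in.
by rewrite -marked_B //; apply: coins.
Qed.

Lemma extension_event_sat n k (E0 : rel 'I_k) m (w : Omega k m) :
  weakly_saturated E0 n -> extension_property n w -> event_sat E0 m n w.
Proof.
move=> wsat ext; apply/forallP => A; apply/implyP => A_lt; apply/forallP => f.
pose B := [set a in A | f a].
have [i i_adj] : exists i, forall c, c \in [set a.1 | a in B] -> E0 c i.
  apply: wsat; apply: leq_ltn_trans A_lt; apply: leq_trans (leq_imset_card _ _) _.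
  by apply: subset_leq_card; apply/subsetP => a; rewrite inE => /andP[].
have [l /and3P[l_gt0 l_fresh /forall_inP coins]] := ext i A B (ltnW A_lt).
apply/existsP; exists (i, l); rewrite l_fresh; apply/forall_inP => a a_in.
have a_neq : a != (i, l) by apply: contraNneq l_fresh => <-.
rewrite Hm_edge_fresh // (eqP (coins a a_in)) inE a_in /=.
by case f_a: (f a); rewrite ?andbF // andbT i_adj //; apply: imset_f; rewrite inE a_in.
Qed.

Lemma extension_event_X n k (E0 : rel 'I_k) m (w : Omega k m) :
  extension_property n w -> event_X E0 m n w.
Proof.
move=> ext; apply/forallP => p; apply/forallP => is_; apply/forallP => i.
apply/forallP => js; apply/implyP => /forallP adj.
pose A := [set (is_ q, js q) | q : 'I_p].
have A_le : #|A| <= n by rewrite (leq_trans (leq_imset_card _ _)) // card_ord ltnW.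
have [l /and3P[l_gt0 l_fresh /forall_inP coins]] := ext i A A A_le.
apply/existsP; exists l; apply/forallP => q.
have q_in : (is_ q, js q) \in A by apply: imset_f.
have q_neq : (is_ q, js q) != (i, l) by apply: contraNneq l_fresh => <-.
by rewrite Hm_edge_fresh // adj (eqP (coins _ q_in)) q_in.
Qed.

Lemma prob_gt0 k m (ev : pred (Omega k m)) w : ev w -> (0 < prob ev)%R.
Proof.
move=> ev_w; rewrite /prob divr_gt0 // ltr0n; apply/card_gt0P; exists w => //.
by rewrite inE.
Qed.

Unset Implicit Arguments.

Theorem lemma1 (n k : nat) (E0 : rel 'I_k) :
  0 < k -> n <= k -> is_graph E0 -> weakly_saturated E0 n ->
  exists m : nat,
    (0 < prob (event_sat E0 m n))%R /\ (0 < prob (event_X E0 m n))%R.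
Proof.
move=> _ _ _ wsat; have [m [w ext]] := exists_extension_property n k.
exists m; split; apply: (prob_gt0 (w := w)).
  exact: extension_event_sat.
exact: extension_event_X.
Qed.
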